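(* Let $A,\Delta A\in\mathbb{R}^{n\times m}$, $\widetilde A=A+\Delta A$, $1\le r<\min\{n,m\}$, and assume $\sigma_r-\widetilde\sigma_{r+1}>0$ and $\widetilde\sigma_r-\sigma_{r+1}>0$. Let $H_1\in\mathbb{R}^{(n-r)\times r}$, $H_2\in\mathbb{R}^{(m-r)\times r}$, $H_3\in\mathbb{R}^{r\times (m-r)}$, $H_4\in\mathbb{R}^{r\times(n-r)}$ be arbitrary, and set $B_1=F_U^{21}\circ(H_1\widetilde\Sigma_1)$, $B_2=F_U^{21}\circ(\Sigma_2H_2)$, $B_3=F_U^{12}\circ(H_3\widetilde\Sigma_2^T)$, $B_4=F_U^{12}\circ(\Sigma_1H_4)$. Then for $p\in\{2,\infty\}$, \[\|B_1\|_p\le\frac{\widetilde\sigma_r}{\widetilde\sigma_r^2-\sigma_{r+1}^2}\|H_1\|_p,\quad \|B_2\|_p\le\frac{\sigma_{r+1}}{\widetilde\sigma_r^2-\sigma_{r+1}^2}\|H_2\|_p,\] \[\|B_3\|_p\le\frac{\widetilde\sigma_{r+1}}{\sigma_r^2-\widetilde\sigma_{r+1}^2}\|H_3\|_p,\quad \|B_4\|_p\le\frac{\sigma_{r}}{\sigma_r^2-\widetilde\sigma_{r+1}^2}\|H_4\|_p.\]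
   Context: $\sigma_1\ge\sigma_2\ge\dots$ and $\widetilde\sigma_1\ge\widetilde\sigma_2\ge\dots$ are the singular values of $A$ and $\widetilde A$, with $\sigma_i=\widetilde\sigma_i=0$ for $i>\min\{n,m\}$. $\Sigma_1=\mathrm{diag}(\sigma_1,\dots,\sigma_r)$, $\widetilde\Sigma_1=\mathrm{diag}(\widetilde\sigma_1,\dots,\widetilde\sigma_r)$; $\Sigma_2,\widetilde\Sigma_2\in\mathbb{R}^{(n-r)\times(m-r)}$ are rectangular diagonal matrices with diagonals $\sigma_{r+1},\sigma_{r+2},\dots$ and $\widetilde\sigma_{r+1},\widetilde\sigma_{r+2},\dots$. $F_U^{12}\in\mathbb{R}^{r\times(n-r)}$ has entries $(F_U^{12})_{i,j-r}=1/(\widetilde\sigma_j^2-\sigma_i^2)$ for $1\le i\le r<j\le n$; $F_U^{21}\in\mathbb{R}^{(n-r)\times r}$ has entries $(F_U^{21})_{i-r,j}=1/(\widetilde\sigma_j^2-\sigma_i^2)$ for $r<i\le n$, $1\le j\le r$. $\circ$ is the Hadamard product. $\|\cdot\|_p$ is the Schatten $p$-norm, so $\|\cdot\|_2$ is the Frobenius norm and $\|\cdot\|_\infty$ the spectral norm. *)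

From HB Require Import structures.
From mathcomp Require Import all_boot all_order all_algebra.
From mathcomp Require Import boolp classical_sets reals.
Set Implicit Arguments. Unset Strict Implicit. Unset Printing Implicit Defensive.
Import Order.TTheory GRing.Theory Num.Theory.
Local Open Scope ring_scope.
Local Open Scope classical_set_scope.

(* Frobenius norm (Schatten 2-norm). *)
Definition frobnorm {R : realType} {p q : nat} (B : 'M[R]_(p, q)) : R :=
  Num.sqrt (\sum_(i < p) \sum_(j < q) B i j ^+ 2).

Definition specnorm {R : realType} {p q : nat} (B : 'M[R]_(p, q)) : R :=
  sup [set frobnorm (B *m x) | x in [set x : 'cV[R]_q | frobnorm x <= 1]].

Inductive schatten_index := p_two | p_inf.

Definition schatten {R : realType} (s : schatten_index) {p q : nat}
  (B : 'M[R]_(p, q)) : R :=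
  match s with p_two => frobnorm B | p_inf => specnorm B end.

Definition hadamard {R : realType} {p q : nat} (F G : 'M[R]_(p, q)) :
  'M[R]_(p, q) := \matrix_(i, j) (F i j * G i j).

Definition diagent {R : realType} {n m : nat} (S : 'M[R]_(n, m)) (k : nat) : R :=
  match @insub _ (fun x => x < n)%N 'I_n k, @insub _ (fun x => x < m)%N 'I_m k with
  | Some i, Some j => S i j
  | _, _ => 0
  end.

Definition is_svd {R : realType} {n m : nat} (A : 'M[R]_(n, m))
  (U : 'M[R]_n) (S : 'M[R]_(n, m)) (V : 'M[R]_m) : Prop :=
  [/\ U *m U^T = 1%:M, V *m V^T = 1%:M,
      (forall (i : 'I_n) (j : 'I_m), (i : nat) != j -> S i j = 0),
      (forall k : nat, 0 <= diagent S k /\ diagent S k.+1 <= diagent S k)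
    & A = U *m S *m V^T].

(* With S the Sigma of an SVD of A, sv S k is sigma_{k+1} (0-based index),
   equal to 0 for k >= min(n,m). *)
Definition sv {R : realType} {n m : nat} (S : 'M[R]_(n, m)) (k : nat) : R :=
  diagent S k.

Definition FU21 {R : realType} (n r : nat) (sig sigt : nat -> R) :
  'M[R]_(n - r, r) :=
  \matrix_(i, j) (1 / (sigt j ^+ 2 - sig (r + i)%N ^+ 2)).

Definition FU12 {R : realType} (n r : nat) (sig sigt : nat -> R) :
  'M[R]_(r, n - r) :=
  \matrix_(i, j) (1 / (sigt (r + j)%N ^+ 2 - sig i ^+ 2)).

Definition Sig1 {R : realType} (r : nat) (sig : nat -> R) : 'M[R]_r :=
  \matrix_(i, j) (if (i : nat) == j then sig i else 0).

Definition Sig2 {R : realType} (n m r : nat) (sig : nat -> R) :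
  'M[R]_(n - r, m - r) :=
  \matrix_(i, j) (if (i : nat) == j then sig (r + i)%N else 0).

From mathcomp Require Import all_boot all_order all_algebra.
From mathcomp Require Import boolp classical_sets reals.
From mathcomp Require Import ring lra.
Import Order.TTheory GRing.Theory Num.Theory.
Local Open Scope ring_scope.
Set Implicit Arguments. Unset Strict Implicit.

(* Each B_k has entries K_ij y_j^k / (y_j^2 - x_i^2), where x_i <= a < b <= y_j or the other
   way round, a and b being the singular values on the two sides of the gap.  For k = 2 this
   matrix Z solves the Stein equation Z = K + diag(x^2) Z diag(y^-2), whose diagonal
   coefficients have entries at most a^2 and b^-2.  Both Schatten norms are subadditive and
   shrink by the factor max |d_i| under multiplication by a diagonal matrix diag(d), so
   |Z| <= |K| + (a/b)^2 |Z|, i.e. |Z| <= b^2 / (b^2 - a^2) |K|; the other exponents k follow by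
   one more diagonal scaling by y^(k-2). *)

Section SumsOfSquares.
Variable R : realFieldType.

(* Lagrange's identity: the defect is a sum of squares [(a i b j - a j b i)^2]. *)
Lemma cauchy_schwarz_sum (T : finType) (a b : T -> R) :
  (\sum_k a k * b k) ^+ 2 <= (\sum_k a k ^+ 2) * (\sum_k b k ^+ 2).
Proof.
set Sa := \sum_k a k ^+ 2; set Sb := \sum_k b k ^+ 2; set Sab := \sum_k a k * b k.
have prod_sum (u v : T -> R) : \sum_i \sum_j u i * v j = (\sum_k u k) * (\sum_k v k).
  by rewrite mulr_suml; apply: eq_bigr => i _; rewrite mulr_sumr.
have lagrange : \sum_i \sum_j (a i * b j - a j * b i) ^+ 2 = (Sa * Sb - Sab ^+ 2) *+ 2.
  have -> : \sum_i \sum_j (a i * b j - a j * b i) ^+ 2 =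
      \sum_i \sum_j (a i ^+ 2 * b j ^+ 2) + \sum_i \sum_j (b i ^+ 2 * a j ^+ 2)
      - (\sum_i \sum_j (a i * b i) * (a j * b j)) *+ 2.
    rewrite -sumrMnl -big_split -sumrB /=; apply: eq_bigr => i _.
    rewrite -sumrMnl -big_split -sumrB /=; apply: eq_bigr => j _; ring.
  by rewrite !prod_sum -/Sa -/Sb -/Sab; ring.
suff : 0 <= (Sa * Sb - Sab ^+ 2) *+ 2 by rewrite pmulrn_lge0 // subr_ge0.
by rewrite -lagrange; apply: sumr_ge0 => i _; apply: sumr_ge0 => j _; apply: sqr_ge0.
Qed.

Lemma sqr_sum_disjoint (T : finType) (f : T -> R) :
  (forall k l, k != l -> f k * f l = 0) -> (\sum_k f k) ^+ 2 = \sum_k f k ^+ 2.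
Proof.
move=> f_disj; rewrite expr2 mulr_suml; apply: eq_bigr => k _.
rewrite mulr_sumr (bigD1 k) //= big1 ?addr0 // => l /negbTE lk.
by apply: f_disj; rewrite eq_sym lk.
Qed.

End SumsOfSquares.

Section SqrtSums.
Variable R : rcfType.

Lemma minkowski_sum (T : finType) (a b : T -> R) :
  Num.sqrt (\sum_k (a k + b k) ^+ 2) <=
  Num.sqrt (\sum_k a k ^+ 2) + Num.sqrt (\sum_k b k ^+ 2).
Proof.
have sqr_sum_ge0 (u : T -> R) : 0 <= \sum_k u k ^+ 2.
  by apply: sumr_ge0 => k _; apply: sqr_ge0.
set A := Num.sqrt (\sum_k a k ^+ 2); set B := Num.sqrt (\sum_k b k ^+ 2).
have cross_le : \sum_k a k * b k <= A * B.
  rewrite -sqrtrM ?sqr_sum_ge0 //; apply: le_trans (ler_norm _) _.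
  by rewrite -sqrtr_sqr; apply: ler_wsqrtr; apply: cauchy_schwarz_sum.
have A_ge0 : 0 <= A by apply: sqrtr_ge0.
have B_ge0 : 0 <= B by apply: sqrtr_ge0.
rewrite -[X in _ <= X]ger0_norm ?addr_ge0 // -sqrtr_sqr; apply: ler_wsqrtr.
have -> : \sum_k (a k + b k) ^+ 2 =
    \sum_k a k ^+ 2 + (\sum_k a k * b k) *+ 2 + \sum_k b k ^+ 2.
  by rewrite -sumrMnl -!big_split /=; apply: eq_bigr => k _; ring.
rewrite sqrrD -[\sum_k a k ^+ 2]sqr_sqrtr ?sqr_sum_ge0 //.
rewrite -[\sum_k b k ^+ 2]sqr_sqrtr ?sqr_sum_ge0 // -/A -/B.
by rewrite lerD2r lerD2l lerMn2r.
Qed.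

End SqrtSums.

Section Frobenius.
Variable R : realType.

Lemma sum_sqr_ge0 p q (B : 'M[R]_(p, q)) : 0 <= \sum_i \sum_j B i j ^+ 2.
Proof. by apply: sumr_ge0 => i _; apply: sumr_ge0 => j _; apply: sqr_ge0. Qed.

Lemma frobnorm_ge0 p q (B : 'M[R]_(p, q)) : 0 <= frobnorm B.
Proof. exact: sqrtr_ge0. Qed.

Lemma frobnorm0 p q : frobnorm (0 : 'M[R]_(p, q)) = 0.
Proof.
by rewrite /frobnorm big1 ?sqrtr0 // => i _; rewrite big1 // => j _; rewrite mxE expr0n.
Qed.

Lemma frobnormZ p q a (B : 'M[R]_(p, q)) : frobnorm (a *: B) = `|a| * frobnorm B.
Proof.
rewrite /frobnorm -sqrtr_sqr -sqrtrM ?sqr_ge0 // mulr_sumr; congr Num.sqrt.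
by apply: eq_bigr => i _; rewrite mulr_sumr; apply: eq_bigr => j _; rewrite mxE exprMn.
Qed.

Lemma frobnorm_tr p q (B : 'M[R]_(p, q)) : frobnorm B^T = frobnorm B.
Proof.
rewrite /frobnorm exchange_big /=; congr Num.sqrt.
by apply: eq_bigr => i _; apply: eq_bigr => j _; rewrite mxE.
Qed.

Lemma ler_frobnormD p q (A B : 'M[R]_(p, q)) :
  frobnorm (A + B) <= frobnorm A + frobnorm B.
Proof.
rewrite /frobnorm !pair_bigA /=; under eq_bigr do rewrite mxE.
exact: minkowski_sum.
Qed.

Lemma ler_frobnormM p q s (A : 'M[R]_(p, q)) (B : 'M[R]_(q, s)) :
  frobnorm (A *m B) <= frobnorm A * frobnorm B.
Proof.
rewrite /frobnorm -sqrtrM ?sum_sqr_ge0 //; apply: ler_wsqrtr.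
rewrite [X in _ <= _ * X]exchange_big /= mulr_suml; apply: ler_sum => i _.
rewrite mulr_sumr; apply: ler_sum => j _; rewrite mxE; exact: cauchy_schwarz_sum.
Qed.

Definition diag_bounded (c : R) p q (M : 'M[R]_(p, q)) : Prop :=
  [/\ 0 <= c, forall (i : 'I_p) (j : 'I_q), (i : nat) != j -> M i j = 0
    & forall i j, `|M i j| <= c].

Lemma diag_bounded_tr c p q (M : 'M[R]_(p, q)) :
  diag_bounded c M -> diag_bounded c M^T.
Proof.
case=> c_ge0 M_offdiag M_le; split=> // i j; rewrite mxE //.
by rewrite eq_sym; apply: M_offdiag.
Qed.

Lemma diag_mx_bounded c n (d : 'rV[R]_n) :
  0 <= c -> (forall j, `|d 0 j| <= c) -> diag_bounded c (diag_mx d).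
Proof.
move=> c_ge0 d_le; split=> // i j; rewrite mxE; last first.
  by case: eqP => [->|_]; rewrite ?mulr1n ?mulr0n ?normr0.
by move=> ij; rewrite -val_eqE (negbTE ij) mulr0n.
Qed.

Lemma ler_frobnorm_diag_mull c p q s (M : 'M[R]_(p, q)) (Y : 'M[R]_(q, s)) :
  diag_bounded c M -> frobnorm (M *m Y) <= c * frobnorm Y.
Proof.
case=> c_ge0 M_offdiag M_le.
rewrite /frobnorm -[c]ger0_norm // -sqrtr_sqr -sqrtrM ?sqr_ge0 //; apply: ler_wsqrtr.
have entry_sqr i j : (M *m Y) i j ^+ 2 = \sum_k M i k ^+ 2 * Y k j ^+ 2.
  rewrite mxE sqr_sum_disjoint => [|k l kl].
    by apply: eq_bigr => k _; rewrite exprMn.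
  have [ik|/M_offdiag ->] := eqVneq (i : nat) k; last by rewrite !mul0r.
  by rewrite (M_offdiag i l) ?mul0r ?mulr0 // ik.
have col_le k : \sum_i M i k ^+ 2 <= c ^+ 2.
  have [kp|pk] := ltnP k p.
    rewrite (bigD1 (Ordinal kp)) //= big1 ?addr0 => [|i ik].
      by rewrite -real_normK ?num_real //; apply: lerXn2r; rewrite ?nnegrE.
    by rewrite M_offdiag ?expr0n //; apply: contra ik => /eqP ik; apply/eqP/val_inj.
  rewrite big1 ?exprn_ge0 // => i _; rewrite M_offdiag ?expr0n //.
  by rewrite neq_ltn (leq_trans (ltn_ord i) pk).
under eq_bigr do under eq_bigr do rewrite entry_sqr.
under eq_bigr do rewrite exchange_big /=.
rewrite exchange_big /=; under eq_bigr do rewrite exchange_big /=.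
rewrite mulr_sumr; apply: ler_sum => k _; rewrite mulr_sumr; apply: ler_sum => j _.
by rewrite -mulr_suml; apply: ler_wpM2r; [apply: sqr_ge0 | apply: col_le].
Qed.

End Frobenius.

Section Spectral.
Variable R : realType.
Local Open Scope classical_set_scope.

Lemma specnorm_has_sup p q (A : 'M[R]_(p, q)) :
  has_sup [set frobnorm (A *m x) | x in [set x : 'cV[R]_q | frobnorm x <= 1]].
Proof.
split; first by exists (frobnorm (A *m (0 : 'cV_q))), 0 => //=; rewrite frobnorm0 ler01.
exists (frobnorm A) => _ [x x_le1 <-]; apply: le_trans (ler_frobnormM _ _) _.
by rewrite ler_piMr ?frobnorm_ge0.
Qed.

Lemma ler_frobnorm_specnorm p q (A : 'M[R]_(p, q)) (x : 'cV[R]_q) :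
  frobnorm x <= 1 -> frobnorm (A *m x) <= specnorm A.
Proof. by move=> x_le1; apply: sup_upper_bound (specnorm_has_sup A) _ _; exists x. Qed.

Lemma specnorm_ge0 p q (A : 'M[R]_(p, q)) : 0 <= specnorm A.
Proof.
by have := @ler_frobnorm_specnorm _ _ A 0; rewrite mulmx0 !frobnorm0; apply; apply: ler01.
Qed.

Lemma specnorm_le p q (A : 'M[R]_(p, q)) C :
  (forall x : 'cV[R]_q, frobnorm x <= 1 -> frobnorm (A *m x) <= C) -> specnorm A <= C.
Proof.
move=> A_le; apply: ge_sup (proj1 (specnorm_has_sup A)) _.
by move=> _ [x x_le1 <-]; apply: A_le.
Qed.

Lemma ler_frobnorm_specnormM p q (A : 'M[R]_(p, q)) (x : 'cV[R]_q) :
  frobnorm (A *m x) <= specnorm A * frobnorm x.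
Proof.
have [x0|x_neq0] := eqVneq (frobnorm x) 0.
  by apply: le_trans (ler_frobnormM _ _) _; rewrite x0 !mulr0.
have x_gt0 : 0 < frobnorm x by rewrite lt_def x_neq0 frobnorm_ge0.
have unit_x : frobnorm ((frobnorm x)^-1 *: x) <= 1.
  by rewrite frobnormZ ger0_norm ?invr_ge0 ?frobnorm_ge0 // mulVf.
have := ler_frobnorm_specnorm A unit_x.
by rewrite -scalemxAr frobnormZ ger0_norm ?invr_ge0 ?frobnorm_ge0 // mulrC ler_pdivrMr.
Qed.

End Spectral.

Section Schatten.
Variables (R : realType) (s : schatten_index).
Local Notation N := (@schatten R s _ _).

Lemma schatten_ge0 p q (A : 'M[R]_(p, q)) : 0 <= N A.
Proof. by case: s; [apply: frobnorm_ge0 | apply: specnorm_ge0]. Qed.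

Lemma ler_schattenD p q (A B : 'M[R]_(p, q)) : N (A + B) <= N A + N B.
Proof.
case: s => /=; first exact: ler_frobnormD.
apply: specnorm_le => x x_le1; rewrite mulmxDl.
by apply: le_trans (ler_frobnormD _ _) _; rewrite lerD ?ler_frobnorm_specnorm.
Qed.

Lemma ler_schatten_diag_mull c p q t (M : 'M[R]_(p, q)) (A : 'M[R]_(q, t)) :
  diag_bounded c M -> N (M *m A) <= c * N A.
Proof.
move=> M_bd; have [c_ge0 _ _] := M_bd.
case: s => /=; first exact: ler_frobnorm_diag_mull.
apply: specnorm_le => x x_le1; rewrite -mulmxA.
apply: le_trans (ler_frobnorm_diag_mull _ M_bd) _.
by rewrite ler_wpM2l ?ler_frobnorm_specnorm.
Qed.

Lemma ler_schatten_diag_mulr c p q t (A : 'M[R]_(p, q)) (M : 'M[R]_(q, t)) :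
  diag_bounded c M -> N (A *m M) <= c * N A.
Proof.
move=> M_bd; have [c_ge0 _ _] := M_bd.
case: s => /=.
  by rewrite -frobnorm_tr trmx_mul -(frobnorm_tr A); apply/ler_frobnorm_diag_mull/diag_bounded_tr.
apply: specnorm_le => x x_le1; rewrite -mulmxA.
apply: le_trans (ler_frobnorm_specnormM _ _) _; rewrite mulrC ler_wpM2r ?specnorm_ge0 //.
by apply: le_trans (ler_frobnorm_diag_mull _ M_bd) _; rewrite ler_piMr.
Qed.

Lemma schatten_stein_le xi eta p q (C K : 'M[R]_(p, q)) (X : 'M[R]_p) (Y : 'M[R]_q) :
  diag_bounded xi X -> diag_bounded eta Y -> xi * eta < 1 ->
  C = K + X *m C *m Y -> N C <= N K / (1 - xi * eta).
Proof.
move=> X_bd Y_bd contr stein; have [eta_ge0 _ _] := Y_bd.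
have NC_le : N C <= N K + xi * eta * N C.
  rewrite {1}stein; apply: le_trans (ler_schattenD _ _) _; rewrite lerD2l.
  apply: le_trans (ler_schatten_diag_mulr _ Y_bd) _.
  by rewrite -mulrA mulrCA ler_wpM2l ?ler_schatten_diag_mull.
by rewrite ler_pdivlMr ?subr_gt0 //; lra.
Qed.

End Schatten.

Lemma normVXn_le (R : realFieldType) (b y : R) n : 0 < b -> b <= y -> `|y ^- n| <= b ^- n.
Proof.
move=> b_gt0 b_le_y; have y_gt0 : 0 < y := lt_le_trans b_gt0 b_le_y.
rewrite ger0_norm ?invr_ge0 ?exprn_ge0 ?(ltW y_gt0) // lef_pV2 ?posrE ?exprn_gt0 //.
by rewrite lerXn2r ?nnegrE ?(ltW b_gt0) ?(ltW y_gt0).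
Qed.

Section GapQuotients.
Variables (R : realType) (s : schatten_index) (a b : R).
Hypotheses (a_ge0 : 0 <= a) (a_lt_b : a < b).
Local Notation N := (@schatten R s _ _).

Let b_gt0 : 0 < b. Proof. exact: le_lt_trans a_ge0 a_lt_b. Qed.

Let sqr_lt_gap x y : 0 <= x <= a -> b <= y -> x ^+ 2 < y ^+ 2.
Proof.
case/andP=> x_ge0 x_le b_le_y.
by rewrite ltrXn2r // (le_lt_trans x_le (lt_le_trans a_lt_b b_le_y)).
Qed.

Let sqr_gap_gt0 : 0 < b ^+ 2 - a ^+ 2. Proof. by rewrite subr_gt0 ltrXn2r. Qed.

Let gap_factorE k : (k <= 2)%N ->
  b ^+ k / (b ^+ 2 - a ^+ 2) = b ^- (2 - k) / (1 - a ^+ 2 * b ^- 2).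
Proof.
move=> k_le2.
rewrite -[in b ^+ k](subKn k_le2) exprB ?leq_subr ?unitfE ?gt_eqF //.
by field; rewrite !gt_eqF ?exprn_gt0.
Qed.

Let diag_sqr_bounded n (x : 'I_n -> R) :
  (forall i, 0 <= x i <= a) -> diag_bounded (a ^+ 2) (diag_mx (\row_i x i ^+ 2)).
Proof.
move=> x_bd; apply: diag_mx_bounded => [|i]; first exact: exprn_ge0.
have /andP[x_ge0 x_le] := x_bd i.
by rewrite mxE ger0_norm ?exprn_ge0 // lerXn2r ?nnegrE.
Qed.

Let diag_invXn_bounded n e (y : 'I_n -> R) :
  (forall j, b <= y j) -> diag_bounded (b ^- e) (diag_mx (\row_j y j ^- e)).
Proof.
move=> y_ge; apply: diag_mx_bounded => [|j]; first by rewrite invr_ge0 exprn_ge0 ?ltW.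
by rewrite mxE normVXn_le.
Qed.

Lemma ler_schatten_gap_col p q (x : 'I_p -> R) (y : 'I_q -> R) k (K B : 'M[R]_(p, q)) :
  (forall i, 0 <= x i <= a) -> (forall j, b <= y j) -> (k <= 2)%N ->
  (forall i j, B i j = K i j * y j ^+ k / (y j ^+ 2 - x i ^+ 2)) ->
  N B <= b ^+ k / (b ^+ 2 - a ^+ 2) * N K.
Proof.
move=> x_bd y_ge k_le2 B_def.
have y_gt0 j : 0 < y j := lt_le_trans b_gt0 (y_ge j).
have gap_gt0 i j : 0 < y j ^+ 2 - x i ^+ 2 by rewrite subr_gt0 sqr_lt_gap.
set Z := \matrix_(i, j) (K i j * y j ^+ 2 / (y j ^+ 2 - x i ^+ 2)).
have Z_le : N Z <= N K / (1 - a ^+ 2 * b ^- 2).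
  apply: (schatten_stein_le s (diag_sqr_bounded x_bd) (diag_invXn_bounded 2 y_ge)).
    by rewrite ltr_pdivrMr ?exprn_gt0 // mul1r ltrXn2r.
  apply/matrixP => i j; rewrite mul_mx_diag mul_diag_mx !mxE.
  by field; rewrite !gt_eqF.
have B_Z : B = Z *m diag_mx (\row_j y j ^- (2 - k)).
  apply/matrixP => i j; rewrite mul_mx_diag !mxE B_def.
  rewrite -[in y j ^+ k](subKn k_le2) exprB ?leq_subr ?unitfE ?gt_eqF //.
  by field; rewrite !gt_eqF ?exprn_gt0.
rewrite B_Z gap_factorE // mulrAC -mulrA.
apply: le_trans (ler_schatten_diag_mulr s Z (diag_invXn_bounded _ y_ge)) _.
by rewrite ler_wpM2l // invr_ge0 exprn_ge0 ?ltW.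
Qed.

Lemma ler_schatten_gap_row p q (x : 'I_p -> R) (y : 'I_q -> R) k (K B : 'M[R]_(p, q)) :
  (forall i, b <= x i) -> (forall j, 0 <= y j <= a) -> (k <= 2)%N ->
  (forall i j, B i j = K i j * x i ^+ k / (y j ^+ 2 - x i ^+ 2)) ->
  N B <= b ^+ k / (b ^+ 2 - a ^+ 2) * N K.
Proof.
move=> x_ge y_bd k_le2 B_def.
have x_gt0 i : 0 < x i := lt_le_trans b_gt0 (x_ge i).
have gap_gt0 i j : 0 < x i ^+ 2 - y j ^+ 2 by rewrite subr_gt0 sqr_lt_gap.
set W := \matrix_(i, j) (K i j * x i ^+ 2 / (x i ^+ 2 - y j ^+ 2)).
have W_le : N W <= N K / (1 - a ^+ 2 * b ^- 2).
  rewrite [a ^+ 2 * _]mulrC.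
  apply: (schatten_stein_le s (diag_invXn_bounded 2 x_ge) (diag_sqr_bounded y_bd)).
    by rewrite mulrC ltr_pdivrMr ?exprn_gt0 // mul1r ltrXn2r.
  apply/matrixP => i j; rewrite mul_mx_diag mul_diag_mx !mxE.
  by field; rewrite !gt_eqF.
have D_bd : diag_bounded (b ^- (2 - k)) (diag_mx (\row_i - x i ^- (2 - k))).
  apply: diag_mx_bounded => [|i]; first by rewrite invr_ge0 exprn_ge0 ?ltW.
  by rewrite mxE normrN normVXn_le.
have B_W : B = diag_mx (\row_i - x i ^- (2 - k)) *m W.
  apply/matrixP => i j; rewrite mul_diag_mx !mxE B_def.
  rewrite -[in x i ^+ k](subKn k_le2) exprB ?leq_subr ?unitfE ?gt_eqF //.
  have gap_lt0 : y j ^+ 2 - x i ^+ 2 < 0 by rewrite -opprB oppr_lt0.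
  by field; rewrite (gt_eqF (gap_gt0 i j)) (lt_eqF gap_lt0) gt_eqF ?exprn_gt0.
rewrite B_W gap_factorE // mulrAC -mulrA.
apply: le_trans (ler_schatten_diag_mull s W D_bd) _.
by rewrite ler_wpM2l // invr_ge0 exprn_ge0 ?ltW.
Qed.

Lemma ler_schatten_gap_col_mull p q t (x : 'I_p -> R) (y : 'I_q -> R)
    (M : 'M[R]_(p, t)) (H : 'M[R]_(t, q)) (B : 'M[R]_(p, q)) :
  (forall i, 0 <= x i <= a) -> (forall j, b <= y j) -> diag_bounded a M ->
  (forall i j, B i j = (M *m H) i j / (y j ^+ 2 - x i ^+ 2)) ->
  N B <= a / (b ^+ 2 - a ^+ 2) * N H.
Proof.
move=> x_bd y_ge M_bd B_def.
apply: le_trans (ler_schatten_gap_col (k := 0) x_bd y_ge _ _) _ => // [i j|].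
  by rewrite B_def expr0 mulr1.
rewrite expr0 mulrAC [X in _ <= X]mulrAC mul1r ler_wpM2r ?invr_ge0 ?(ltW sqr_gap_gt0) //.
exact: ler_schatten_diag_mull.
Qed.

Lemma ler_schatten_gap_row_mulr p q t (x : 'I_p -> R) (y : 'I_q -> R)
    (H : 'M[R]_(p, t)) (M : 'M[R]_(t, q)) (B : 'M[R]_(p, q)) :
  (forall i, b <= x i) -> (forall j, 0 <= y j <= a) -> diag_bounded a M ->
  (forall i j, B i j = (H *m M) i j / (y j ^+ 2 - x i ^+ 2)) ->
  N B <= a / (b ^+ 2 - a ^+ 2) * N H.
Proof.
move=> x_ge y_bd M_bd B_def.
apply: le_trans (ler_schatten_gap_row (k := 0) x_ge y_bd _ _) _ => // [i j|].
  by rewrite B_def expr0 mulr1.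
rewrite expr0 mulrAC [X in _ <= X]mulrAC mul1r ler_wpM2r ?invr_ge0 ?(ltW sqr_gap_gt0) //.
exact: ler_schatten_diag_mulr.
Qed.

End GapQuotients.

Section SingularValues.
Variable R : realType.

Lemma svd_sv_ge0 n m (A : 'M[R]_(n, m)) U S V : is_svd A U S V -> forall k, 0 <= sv S k.
Proof. by case=> _ _ _ sv_dec _ k; case: (sv_dec k). Qed.

Lemma svd_sv_nonincr n m (A : 'M[R]_(n, m)) U S V :
  is_svd A U S V -> {homo sv S : i j / (i <= j)%N >-> j <= i}.
Proof.
case=> _ _ _ sv_dec _; apply: (homo_leq (r := fun x y => y <= x)) => //.
  by move=> y x z /[swap]; apply: le_trans.
by move=> k; case: (sv_dec k).
Qed.

Lemma svd_sv_tail n m (A : 'M[R]_(n, m)) U S V :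
  is_svd A U S V -> forall r i, 0 <= sv S (r + i) <= sv S r.
Proof. by move=> svdA r i; rewrite (svd_sv_ge0 svdA) (svd_sv_nonincr svdA) ?leq_addr. Qed.

Lemma svd_sv_head n m (A : 'M[R]_(n, m)) U S V :
  is_svd A U S V -> forall r (j : 'I_r), sv S r.-1 <= sv S j.
Proof.
by move=> svdA r j; apply: (svd_sv_nonincr svdA); rewrite -ltnS (ltn_predK (ltn_ord j)).
Qed.

Lemma Sig1E r (f : nat -> R) : Sig1 r f = diag_mx (\row_(j < r) f j).
Proof.
apply/matrixP => i j; rewrite !mxE; have [->|ij] := eqVneq i j; rewrite ?eqxx ?mulr1n //.
by rewrite mulr0n ifF //; apply/negbTE.
Qed.

Lemma Sig2_bounded n m r (f : nat -> R) c :
  0 <= c -> (forall i, 0 <= f (r + i)%N <= c) -> diag_bounded c (Sig2 n m r f).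
Proof.
move=> c_ge0 f_bd; split=> // i j; rewrite mxE; first by move/negbTE ->.
by case: eqP => _; rewrite ?normr0 //; have /andP[f_ge0 f_le] := f_bd i; rewrite ger0_norm.
Qed.

End SingularValues.

Theorem lemma2p5 (R : realType) (n m r : nat) (A dA : 'M[R]_(n, m))
  (U : 'M[R]_n) (S : 'M[R]_(n, m)) (V : 'M[R]_m)
  (Ut : 'M[R]_n) (St : 'M[R]_(n, m)) (Vt : 'M[R]_m) :
  is_svd A U S V -> is_svd (A + dA) Ut St Vt ->
  (1 <= r)%N -> (r < minn n m)%N ->
  0 < sv S r.-1 - sv St r -> 0 < sv St r.-1 - sv S r ->
  forall (H1 : 'M[R]_(n - r, r)) (H2 : 'M[R]_(m - r, r))
         (H3 : 'M[R]_(r, m - r)) (H4 : 'M[R]_(r, n - r)),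
  let sig := sv S in let sigt := sv St in
  let B1 := hadamard (FU21 n r sig sigt) (H1 *m Sig1 r sigt) in
  let B2 := hadamard (FU21 n r sig sigt) (Sig2 n m r sig *m H2) in
  let B3 := hadamard (FU12 n r sig sigt) (H3 *m (Sig2 n m r sigt)^T) in
  let B4 := hadamard (FU12 n r sig sigt) (Sig1 r sig *m H4) in
  forall p : schatten_index,
  [/\ schatten p B1 <= sigt r.-1 / (sigt r.-1 ^+ 2 - sig r ^+ 2) * schatten p H1,
      schatten p B2 <= sig r / (sigt r.-1 ^+ 2 - sig r ^+ 2) * schatten p H2,
      schatten p B3 <= sigt r / (sig r.-1 ^+ 2 - sigt r ^+ 2) * schatten p H3
    & schatten p B4 <= sig r.-1 / (sig r.-1 ^+ 2 - sigt r ^+ 2) * schatten p H4].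
Proof.
move=> svdS svdSt _ _ gap gapt H1 H2 H3 H4 sig sigt B1 B2 B3 B4 p.
have lt_sig : sig r < sigt r.-1 by rewrite -subr_gt0.
have lt_sigt : sigt r < sig r.-1 by rewrite -subr_gt0.
have [sig_ge0 sigt_ge0] := (svd_sv_ge0 svdS r, svd_sv_ge0 svdSt r).
have [sig_tail sigt_tail] := (svd_sv_tail svdS r, svd_sv_tail svdSt r).
have [sig_head sigt_head] := (svd_sv_head svdS (r := r), svd_sv_head svdSt (r := r)).
have [x1_bd y2_bd] := (fun i : 'I_(n - r) => sig_tail i, fun j : 'I_(n - r) => sigt_tail j).
split.
- apply: (ler_schatten_gap_col (k := 1) p sig_ge0 lt_sig x1_bd sigt_head) => // i j.
  by rewrite /B1 /hadamard Sig1E mul_mx_diag !mxE mul1r mulrC.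
- apply: (ler_schatten_gap_col_mull p sig_ge0 lt_sig x1_bd sigt_head
    (Sig2_bounded n m sig_ge0 sig_tail)) => i j.
  by rewrite /B2 /hadamard mxE mxE mul1r mulrC.
- apply: (ler_schatten_gap_row_mulr p sigt_ge0 lt_sigt sig_head y2_bd
    (diag_bounded_tr (Sig2_bounded n m sigt_ge0 sigt_tail))) => i j.
  by rewrite /B3 /hadamard mxE mxE mul1r mulrC.
- apply: (ler_schatten_gap_row (k := 1) p sigt_ge0 lt_sigt sig_head y2_bd) => // i j.
  by rewrite /B4 /hadamard Sig1E mul_diag_mx !mxE mul1r expr1 mulrC (mulrC (sig i)).
Qed.
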